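(* Algorithm B (defined in the context) has migration factor at most $\frac34$, and on every input whose optimal offline makespan is $1$ it produces a schedule with makespan at most $1.25$. Hence for every $M\ge\frac34$ there is a semi-online algorithm with migration factor $M$ and competitive ratio at most $\frac54$.
   Context: Model (two hierarchical machines with migration, bin stretching). Jobs $1,2,\dots,n$ arrive one by one ($n$ unknown in advance). Job $j$ has a size $p_j>0$ and a grade of service (GoS) $g_j\in\{1,2\}$; a job of GoS $1$ may only be processed on machine $m_1$, a job of GoS $2$ may be processed on $m_1$ or on $m_2$. The load of a machine is the total size of the jobs assigned to it, and the makespan is the maximum load. When job $j$ arrives, the algorithm must assign it to a machine, and at the same time it may reassign (migrate) previously arrived jobs to other machines (respecting the GoS constraints), provided that the total size of the migrated jobs is at most $M\cdot p_j$; $M\ge 0$ is the migration factor. Bin stretching: the optimal offline makespan of the complete input is known in advance and scaled to $1$. The competitive ratio is the supremum over inputs of (algorithm's makespan)/(optimal makespan). Notation: $Y_{j}$ is the set of jobs on $m_2$ just after job $j$ has been handled (including migrations), $y_j$ its total size, $y_0=0$. $p^{\max Y}_j$ and $p^{\max Y,2}_j$ are the largest and second largest sizes of jobs in $Y_{j-1}$ (each defined as $0$ if it does not exist), and $j^{\max Y}$ is a job of $Y_{j-1}$ of size $p^{\max Y}_j$. ''Sorted $Y_{j-1}$'' means the jobs of $Y_{j-1}$ listed in non-increasing order of size; $w_j$ denotes the total size of the set $W$ chosen when handling $j$. Algorithm B. On arrival of job $j$: Step 2: if $g_j=1$ or $y_{j-1}\ge 0.75$, assign $j$ to $m_1$.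 Step 3: else if $y_{j-1}+p_j\le 1.25$, assign $j$ to $m_2$. Step 4: else if $p_j\ge 0.75$: let $W$ be the longest prefix of sorted $Y_{j-1}$ with total size at most $0.75p_j$ (possibly empty). If $y_{j-1}-w_j+p_j>1.25$, assign $j$ to $m_1$ (no migration); otherwise migrate the jobs of $W$ to $m_1$ and assign $j$ to $m_2$. Step 5: else (so $p_j<0.75$): if $p_j+p^{\max Y}_j>1.25$, assign $j$ to $m_1$. Otherwise choose $W$ as follows: if $p^{\max Y}_j\ge y_{j-1}/2$, let $W=Y_{j-1}\setminus\{j^{\max Y}\}$; if $0.25\le p^{\max Y}_j<y_{j-1}/2$, let $W=\{j^{\max Y}\}$; if $p^{\max Y}_j<0.25$, let $W$ be the shortest prefix of sorted $Y_{j-1}$ with total size at least $0.25$ (or all of $Y_{j-1}$ if none exists), and if then $w_j>0.75p_j$ replace $W$ by $Y_{j-1}\setminus W$. Migrate the jobs of $W$ to $m_1$ and assign $j$ to $m_2$. *)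

From HB Require Import structures.
From mathcomp Require Import all_boot all_order all_algebra.
Set Implicit Arguments. Unset Strict Implicit. Unset Printing Implicit Defensive.
Import Order.TTheory GRing.Theory Num.Theory.
Local Open Scope ring_scope.

(* Grade of service: G1 = may only run on m1; G2 = may run on m1 or m2. *)
Inductive gos := G1 | G2.

Section Defs.
Variable R : realFieldType.

(* A job is (size, GoS).  An input is the sequence of jobs in arrival order;
   jobs are indexed 0, 1, ..., size inp - 1 (job j+1 of the paper is index j). *)
Definition job := (R * gos)%type.

Variable inp : seq job.

Definition psz (i : nat) : R := (nth (0, G1) inp i).1.
Definition pg (i : nat) : gos := (nth (0, G1) inp i).2.
Definition is_g2 (i : nat) : bool := if pg i is G2 then true else false.

Definition positive_input : Prop :=
  forall i, (i < size inp)%N -> 0 < psz i.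

(* An assignment A : nat -> bool says job i is on m2 iff A i. *)
Definition feasible (n : nat) (A : nat -> bool) : Prop :=
  forall i, (i < n)%N -> A i -> is_g2 i.

Definition load1 (n : nat) (A : nat -> bool) : R :=
  \sum_(i <- iota 0 n | ~~ A i) psz i.
Definition load2 (n : nat) (A : nat -> bool) : R :=
  \sum_(i <- iota 0 n | A i) psz i.
Definition makespan (n : nat) (A : nat -> bool) : R :=
  Num.max (load1 n A) (load2 n A).

Definition opt_is (n : nat) (T : R) : Prop :=
  (exists A, feasible n A /\ makespan n A = T) /\
  (forall A, feasible n A -> T <= makespan n A).

Definition migration (j : nat) (A A' : nat -> bool) : R :=
  \sum_(i <- iota 0 j | A i != A' i) psz i.

(* Y : seq nat is the set of (indices of) jobs on m2. *)
Definition load (Y : seq nat) : R := \sum_(i <- Y) psz i.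
Definition pmaxY (Y : seq nat) : R := \big[Num.max/0]_(i <- Y) psz i.

Definition sorted_of (s Y : seq nat) : bool :=
  perm_eq s Y && sorted (fun a b => psz b <= psz a) s.

Definition longest_prefix_le (s : seq nat) (b : R) (W : seq nat) : Prop :=
  exists k, [/\ (k <= size s)%N, W = take k s, load (take k s) <= b &
    forall k', (k < k')%N -> (k' <= size s)%N -> b < load (take k' s)].

Definition shortest_prefix_ge (s : seq nat) (b : R) (W : seq nat) : Prop :=
  (exists k, [/\ (k <= size s)%N, W = take k s, b <= load (take k s) &
     forall k', (k' < k)%N -> load (take k' s) < b])
  \/ ((forall k, (k <= size s)%N -> load (take k s) < b) /\ W = s).

Definition remW (Y W : seq nat) : seq nat := [seq i <- Y | i \notin W].

(* Choice of W in Step 5 (p = size of the arriving job). *)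
Definition step5_W (p : R) (Y W : seq nat) : Prop :=
  let y := load Y in
  let pm := pmaxY Y in
  if y / 2 <= pm then
    exists jm, [/\ jm \in Y, psz jm = pm & W = [seq i <- Y | i != jm]]
  else if 1/4 <= pm then
    exists jm, [/\ jm \in Y, psz jm = pm & W = [:: jm]]
  else
    exists s W0, [/\ sorted_of s Y, shortest_prefix_ge s (1/4) W0 &
      W = if 3/4 * p < load W0 then remW Y W0 else W0].

(* One step of Algorithm B: handling job j turns Y (= Y_{j-1} of the paper)
   into Y' (= Y_j).  Ties (order of equal sizes, choice of j^{maxY}) may be
   broken arbitrarily, hence a relation. *)
Definition B_step (j : nat) (Y Y' : seq nat) : Prop :=
  let p := psz j in
  let y := load Y in
  if ~~ is_g2 j || (3/4 <= y) then Y' = Y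
  else if y + p <= 5/4 then Y' = j :: Y
  else if 3/4 <= p then
    exists s W, [/\ sorted_of s Y, longest_prefix_le s (3/4 * p) W &
      (if 5/4 < y - load W + p then Y' = Y else Y' = j :: remW Y W)]
  else if 5/4 < p + pmaxY Y then Y' = Y
  else exists W, step5_W p Y W /\ Y' = j :: remW Y W.

(* A run of Algorithm B on the first n jobs: Ys j is the content of m2
   after the first j jobs have been handled. *)
Definition B_run (n : nat) (Ys : nat -> seq nat) : Prop :=
  Ys 0%N = [::] /\ forall j, (j < n)%N -> B_step j (Ys j) (Ys j.+1).

End Defs.

(* A (deterministic) online algorithm maps the prefix of jobs seen so far to
   the current assignment of those jobs (true = m2).  Being a function of the
   prefix only, it cannot depend on future jobs or on n. *)
Definition online_alg (R : realFieldType) := seq (job R) -> nat -> bool.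

(* alg is a bin-stretching semi-online algorithm (optimal makespan known and
   scaled to 1) with migration factor M and competitive ratio at most c. *)
Definition semi_online_ok (R : realFieldType) (M c : R) (alg : online_alg R)
  : Prop :=
  forall inp : seq (job R),
    positive_input inp -> opt_is inp (size inp) 1 ->
    (forall j, (j < size inp)%N ->
       feasible inp j.+1 (alg (take j.+1 inp)) /\
       migration inp j (alg (take j inp)) (alg (take j.+1 inp))
         <= M * psz inp j) /\
    makespan inp (size inp) (alg inp) <= c.

From HB Require Import structures.
From mathcomp Require Import all_boot all_order all_algebra.
From mathcomp Require Import lra.
Import Order.TTheory GRing.Theory Num.Theory.
Set Implicit Arguments. Unset Strict Implicit. Unset Printing Implicit Defensive.
Local Open Scope ring_scope.

(* Let [A] be a schedule of makespan 1, so the total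
   size is at most 2.  If [m2] finally carries at least 3/4, then [m1] carries
   at most 2 - 3/4.  Otherwise the load of [m2] stayed below 3/4, hence no job
   ever left [m2], and every grade-2 job on [m1] was rejected in Step 4 or 5
   and is larger than 1/2.  Such a rejection is certified by jobs of [m2] that
   cannot share a machine of [A] with the rejected job; this forces all
   rejected jobs but one, say [r], onto [m1] in [A], and if [A] puts [r] on
   [m2] the certificate jobs go to [m1] and outweigh [r] up to less than 1/4. *)

Section Loads.
Variable R : realFieldType.
Variable inp : seq (job R).
Local Notation p := (psz inp).

Lemma load_cons j Y : load inp (j :: Y) = p j + load inp Y.
Proof. by rewrite /load big_cons. Qed.

Lemma load_seq1 j : load inp [:: j] = p j.
Proof. by rewrite /load big_seq1. Qed.

Lemma load_cat s1 s2 : load inp (s1 ++ s2) = load inp s1 + load inp s2.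
Proof. by rewrite /load big_cat. Qed.

Lemma load_perm s1 s2 : perm_eq s1 s2 -> load inp s1 = load inp s2.
Proof. exact: perm_big. Qed.

Lemma load_ge0 Y : {in Y, forall i, 0 <= p i} -> 0 <= load inp Y.
Proof. by move=> h; rewrite /load big_seq; apply: sumr_ge0 => i /h. Qed.

Lemma load_iota_mem m S : uniq S -> {in S, forall i, (i < m)%N} ->
  \sum_(i <- iota 0 m | i \in S) p i = load inp S.
Proof.
move=> uS hS; rewrite -big_filter; apply: load_perm; apply: uniq_perm.
- by rewrite filter_uniq // iota_uniq.
- by [].
move=> i; rewrite mem_filter mem_iota /= add0n.
by case iS: (i \in S) => //=; rewrite hS.
Qed.

Lemma load_filterC (P : pred nat) Y :
  load inp [seq i <- Y | P i] + load inp [seq i <- Y | ~~ P i] = load inp Y.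
Proof. by rewrite /load !big_filter [in RHS](bigID P). Qed.

Lemma load_remW Y W : uniq Y -> uniq W -> {subset W <= Y} ->
  load inp (remW Y W) = load inp Y - load inp W.
Proof.
move=> uY uW sW; rewrite -(load_filterC (mem W) Y).
have -> : load inp [seq i <- Y | i \in W] = load inp W.
  apply: load_perm; apply: uniq_perm => //; first by rewrite filter_uniq.
  by move=> i; rewrite mem_filter andb_idr //; apply: sW.
by rewrite addrAC subrr add0r.
Qed.

Lemma load_take_mono s k k' : {in s, forall i, 0 <= p i} -> (k <= k')%N ->
  load inp (take k s) <= load inp (take k' s).
Proof.
move=> h kk; rewrite -(subnKC kk) takeD load_cat lerDl; apply: load_ge0 => i hi.
by apply: h; move: hi => /mem_take /mem_drop.
Qed.

Lemma load_take_nth s k : (k < size s)%N ->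
  load inp (take k.+1 s) = load inp (take k s) + p (nth 0%N s k).
Proof. by move=> h; rewrite (take_nth 0%N h) -cats1 load_cat load_seq1. Qed.

Lemma pmaxY_ge Y i : i \in Y -> p i <= pmaxY inp Y.
Proof.
elim: Y => // a Y IH; rewrite inE /pmaxY big_cons => /orP [/eqP -> | h].
  by rewrite le_max lexx.
by rewrite le_max IH ?orbT.
Qed.

Lemma pmaxY_le Y c : 0 <= c -> {in Y, forall i, p i <= c} -> pmaxY inp Y <= c.
Proof.
move=> c0; elim: Y => [|a Y IH] h; first by rewrite /pmaxY big_nil.
rewrite /pmaxY big_cons ge_max h ?mem_head //=; apply: IH => i hi.
by apply: h; rewrite inE hi orbT.
Qed.

Lemma pmaxY_attained Y : pmaxY inp Y = 0 \/ exists2 i, i \in Y & p i = pmaxY inp Y.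
Proof.
elim: Y => [|a Y IH]; first by left; rewrite /pmaxY big_nil.
rewrite /pmaxY big_cons; move: IH; rewrite /pmaxY.
set m := \big[_/_]_(i <- Y) _ => IH.
case: (leP (p a) m) => h.
- case: IH => [->|[i iY ei]]; first by left.
  by right; exists i => //; rewrite inE iY orbT.
- by right; exists a => //; rewrite mem_head.
Qed.

Lemma sorted_desc_trans : transitive (fun a b => p b <= p a).
Proof. by move=> x y z h1 h2; apply: le_trans h2 h1. Qed.

End Loads.

Section Step.
Variable R : realFieldType.
Variable inp : seq (job R).
Local Notation p := (psz inp).
Local Notation load := (load inp).

(* Certificates of a rejection by Step 4 or 5: [j] is too large, or [Y] holds
   jobs none of which can share a machine of capacity 1 with [j]. *)
Definition reject4 j (Y : seq nat) :=
  3/4 <= p j /\ (5/4 < p j \/ exists T : seq nat,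
    [/\ uniq T, {subset T <= Y}, 3/4 * p j < load T & {in T, forall t, 1 < p t + p j}]).
Definition reject5 j (Y : seq nat) := p j < 3/4 /\ exists2 jm, jm \in Y & 5/4 < p j + p jm.

Variant B_step_spec j Y : seq nat -> Prop :=
| StepKeep of ~~ is_g2 inp j || (3/4 <= load Y) : B_step_spec j Y Y
| StepAdd of is_g2 inp j & load Y + p j <= 5/4 : B_step_spec j Y (j :: Y)
| StepMigrate W of is_g2 inp j & load Y < 3/4 & uniq W & {subset W <= Y}
    & load W <= 3/4 * p j & 3/4 <= load (j :: remW Y W) <= 5/4
    : B_step_spec j Y (j :: remW Y W)
| StepReject of is_g2 inp j & load Y < 3/4 & 5/4 < load Y + p j
    & reject4 j Y \/ reject5 j Y : B_step_spec j Y Y.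

Variables (j : nat) (Y : seq nat).
Hypotheses (uY : uniq Y) (posY : {in Y, forall i, 0 < p i}).

Let posY0 : {in Y, forall i, 0 <= p i}.
Proof. by move=> i /posY /ltW. Qed.

Lemma step4_spec s W : load Y < 3/4 -> 3/4 <= p j -> sorted_of inp s Y ->
  longest_prefix_le inp s (3/4 * p j) W ->
  [/\ uniq W, {subset W <= Y}, load W <= 3/4 * p j &
      if (5/4 : R) < load Y - load W + p j then reject4 j Y
      else 3/4 <= load (j :: remW Y W) <= 5/4].
Proof.
move=> yl pj /andP [ps ss] [k [ks WE lk hk]].
have us : uniq s by rewrite (perm_uniq ps).
have ms i : (i \in s) = (i \in Y) by rewrite (perm_mem ps).
have ys : load s = load Y by apply: load_perm.
have uW : uniq W by rewrite WE take_uniq.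
have sW : {subset W <= Y} by move=> i; rewrite WE -ms => /mem_take.
split=> //; first by rewrite WE.
case: ifP => [c | /negbT]; last first.
  have : 0 <= load (remW Y W).
    by apply: load_ge0 => i; rewrite mem_filter => /andP [_ /posY0].
  by rewrite -leNgt load_cons load_remW //; lra.
split=> //.
case: (ltnP k (size s)) => kl; last first.
  by left; move: c; rewrite WE take_oversize // ys; lra.
right; exists (take k.+1 s); split.
- by rewrite take_uniq.
- by move=> i /mem_take; rewrite ms.
- exact: hk.
move=> t tT.
(* [s] is sorted, so every job of the prefix is at least as large as the
   first job left out of [W]. *)
have hn : p (nth 0%N s k) <= p t.
  have it : (index t (take k.+1 s) < k.+1)%N.
    have := index_mem t (take k.+1 s); rewrite tT size_take_min => h.
    by apply: leq_trans h _; apply: geq_minl.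
  rewrite -(nth_index 0%N tT) nth_take //.
  apply: (sorted_leq_nth (@sorted_desc_trans _ inp) (fun x => lexx _) 0%N ss).
  - by rewrite inE (leq_ltn_trans _ kl) // -ltnS.
  - by rewrite inE.
  - by rewrite -ltnS.
have := hk k.+1 (ltnSn k) kl; rewrite load_take_nth // -WE.
by move=> h; lra.
Qed.

Lemma shortest_prefix_load s W0 : sorted_of inp s Y ->
  shortest_prefix_ge inp s (1/4) W0 -> 1/4 <= load Y ->
  [/\ uniq W0, {subset W0 <= Y}, 1/4 <= load W0 & load W0 < 1/4 + pmaxY inp Y].
Proof.
move=> /andP [ps _] sp yl.
have ms i : (i \in s) = (i \in Y) by rewrite (perm_mem ps).
have ys : load s = load Y by apply: load_perm.
case: sp => [[k [ks W0E lk hk]] | [hall _]]; last first.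
  by move: (hall (size s) (leqnn _)); rewrite take_size ys; lra.
split; first by rewrite W0E take_uniq // (perm_uniq ps).
- by move=> i; rewrite W0E -ms => /mem_take.
- by rewrite W0E.
case: k ks W0E lk hk => [|k] ks W0E lk hk.
  by move: lk; rewrite take0 /load big_nil; lra.
rewrite W0E load_take_nth //.
have h1 := hk k (ltnSn k).
have h2 : p (nth 0%N s k) <= pmaxY inp Y by apply: pmaxY_ge; rewrite -ms mem_nth.
lra.
Qed.

Lemma step5_spec W : load Y < 3/4 -> 5/4 < load Y + p j ->
  p j < 3/4 -> p j + pmaxY inp Y <= 5/4 ->
  step5_W inp (p j) Y W ->
  [/\ uniq W, {subset W <= Y}, load W <= 3/4 * p j &
      3/4 <= load (j :: remW Y W) <= 5/4].
Proof.
move=> yl yp pj pm; rewrite /step5_W /=.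
have remWE V : uniq V -> {subset V <= Y} ->
    load (j :: remW Y V) = p j + load Y - load V.
  by move=> uV sV; rewrite load_cons load_remW // addrA.
case: ifP => c6.
  case=> jm [jmY pjm ->].
  have <- : remW Y [:: jm] = [seq i <- Y | i != jm].
    by apply: eq_filter => i; rewrite inE.
  have s1 : {subset [:: jm] <= Y} by move=> i; rewrite inE => /eqP ->.
  have sR : {subset remW Y [:: jm] <= Y} by move=> i; rewrite mem_filter => /andP [].
  have uR : uniq (remW Y [:: jm]) by rewrite filter_uniq.
  rewrite remWE // !load_remW // load_seq1; split=> //; lra.
case: ifP => c7.
  case=> jm [jmY pjm ->].
  have s1 : {subset [:: jm] <= Y} by move=> i; rewrite inE => /eqP ->.
  by rewrite remWE // load_seq1; split=> //; lra.
move/negbT: c6; rewrite -ltNge => c6; move/negbT: c7; rewrite -ltNge => c7.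
case=> s [W0 [so sp ->]].
have [|uW0 sW0 l1 l2] := shortest_prefix_load so sp; first by lra.
case: ifP => c8; last by rewrite remWE //; split=> //; lra.
have sR : {subset remW Y W0 <= Y} by move=> i; rewrite mem_filter => /andP [].
have uR : uniq (remW Y W0) by rewrite filter_uniq.
by rewrite remWE // load_remW //; split=> //; lra.
Qed.

Lemma B_stepP Y' : B_step inp j Y Y' -> B_step_spec j Y Y'.
Proof.
rewrite /B_step /=.
case: ifP => [c2 -> | /negbT]; first exact: StepKeep.
rewrite negb_or negbK => /andP [g2]; rewrite -ltNge => yl.
case: ifP => [c3 -> | /negbT]; first exact: StepAdd.
rewrite -ltNge => c3.
case: ifP => c4.
  case=> s [W [so lp]].
  have [uW sW lW] := step4_spec yl c4 so lp.
  case: ifP => c hW ->; last exact: StepMigrate.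
  by apply: StepReject => //; left.
move/negbT: c4; rewrite -ltNge => c4.
case: ifP => c5.
  move=> ->; apply: StepReject => //; right; split=> //.
  case: (pmaxY_attained inp Y) => [e | [jm jmY e]]; first by move: c5; rewrite e; lra.
  by exists jm => //; rewrite e.
move/negbT: c5; rewrite -leNgt => c5.
case=> W [hW ->].
have [uW sW lW bW] := step5_spec yl c3 c4 c5 hW.
exact: StepMigrate.
Qed.

End Step.

Section Run.
Variable R : realFieldType.
Variable inp : seq (job R).
Local Notation p := (psz inp).
Local Notation n := (size inp).
Local Notation load := (load inp).
Hypothesis pos : positive_input inp.
Variable Ys : nat -> seq nat.
Hypothesis run : B_run inp n Ys.

Lemma B_run_inv j : (j <= n)%N ->
  [/\ uniq (Ys j), {in Ys j, forall i, (i < j)%N && is_g2 inp i} & load (Ys j) <= 5/4].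
Proof.
case: run => Y0 hst; elim: j => [|j IH] jn.
  by rewrite Y0; split => //; rewrite /load big_nil; lra.
have [uY mY lY] := IH (ltnW jn).
have posY : {in Ys j, forall i, 0 < p i}.
  by move=> i /mY /andP [ij _]; apply: pos; apply: ltn_trans ij jn.
have jY : j \notin Ys j by apply/negP => /mY; rewrite ltnn.
have old i : i \in Ys j -> (i < j.+1)%N && is_g2 inp i.
  by move/mY/andP => [ij ->]; rewrite andbT ltnW.
case: (B_stepP uY posY (hst j jn)) => [_ | g2 l | W g2 _ uW sW _ /andP [_ l] | *].
- by split.
- split; [by rewrite /= jY | | by rewrite load_cons; lra].
  by move=> i; rewrite inE => /predU1P [-> | /old //]; rewrite ltnSn.
- split=> //; first by rewrite /= filter_uniq // mem_filter negb_and jY orbT.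
  move=> i; rewrite inE => /predU1P [-> | ]; first by rewrite ltnSn.
  by rewrite mem_filter => /andP [_ /old].
- by split.
Qed.

Lemma B_run_stepP j : (j < n)%N -> B_step_spec inp j (Ys j) (Ys j.+1).
Proof.
move=> jn; case: run => _ hst; have [uY mY _] := B_run_inv (ltnW jn).
apply: (B_stepP uY) (hst j jn) => i /mY /andP [ij _].
by apply: pos; apply: ltn_trans ij jn.
Qed.

Lemma B_run_load_mono j : (j < n)%N -> load (Ys j) <= load (Ys j.+1).
Proof.
move=> jn; have pj := pos jn.
by case: (B_run_stepP jn) => [//|_ _ | W _ yl _ _ _ /andP [] | //];
  rewrite ?load_cons; lra.
Qed.

Lemma B_run_migration j : (j < n)%N ->
  migration inp j (fun i => i \in Ys j) (fun i => i \in Ys j.+1) <= 3/4 * p j.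
Proof.
move=> jn; have pj := pos jn; have [_ mY _] := B_run_inv (ltnW jn).
have no_move Y' : {in iota 0 j, forall i, (i \in Ys j) = (i \in Y')} ->
    migration inp j (fun i => i \in Ys j) (fun i => i \in Y') <= 3/4 * p j.
  move=> h; rewrite /migration big_seq_cond big_pred0; first by lra.
  by move=> i; case iJ: (i \in iota 0 j); rewrite //= h // eqxx.
case: (B_run_stepP jn) => [_ | _ _ | W _ _ uW sW lW _ | *]; try exact: no_move.
  by apply: no_move => i; rewrite mem_iota inE => /ltn_eqF ->.
(* The migrated jobs are exactly those of [W], which all arrived before [j]. *)
rewrite /migration big_seq_cond.
rewrite (eq_bigl (fun i => (i \in iota 0 j) && (i \in W))) -?big_seq_cond.
  by rewrite load_iota_mem // => i /sW /mY /andP [].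
move=> i /=; rewrite mem_iota add0n /=; case: ltnP => //= ij.
rewrite inE (ltn_eqF ij) mem_filter /=.
by case iW: (i \in W) => /=; rewrite ?(sW _ iW) ?eqxx.
Qed.

End Run.

Section Exchange.
Variable R : realFieldType.
Variable inp : seq (job R).
Local Notation p := (psz inp).
Local Notation n := (size inp).
Local Notation load := (load inp).
Hypothesis pos : positive_input inp.

Let p_ge0 i : (i < n)%N -> 0 <= p i.
Proof. by move/pos/ltW. Qed.

Lemma load1D2 m (A : nat -> bool) :
  load1 inp m A + load2 inp m A = \sum_(i <- iota 0 m) p i.
Proof. by rewrite /load1 /load2 addrC [in RHS](bigID A). Qed.

Lemma load_on_machine_le_makespan (A : nat -> bool) b S : uniq S ->
  {in S, forall i, (i < n)%N /\ A i = b} -> load S <= makespan inp n A.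
Proof.
move=> uS hS; have hSn : {in S, forall s, (s < n)%N} by move=> s /hS [].
rewrite -(load_iota_mem inp uS hSn).
apply: (@le_trans _ _ (\sum_(i <- iota 0 n | A i == b) p i)).
  rewrite big_mkcond [leRHS]big_mkcond /= big_seq [leRHS]big_seq.
  apply: ler_sum => i; rewrite mem_iota add0n /= => hi.
  case iS: (i \in S); first by have [_ ->] := hS i iS; rewrite eqxx.
  by case: (A i == b) => //; apply: p_ge0.
rewrite /makespan le_max; case: b {hS}.
  by rewrite (eq_bigl A) ?lexx ?orbT // => i; rewrite eqb_id.
by rewrite (eq_bigl (fun i => ~~ A i)) ?lexx // => i; rewrite eqbF_neg.
Qed.

Lemma load1_exchange (B A : nat -> bool) S E : uniq S -> uniq E ->
  {in S, forall s, [/\ (s < n)%N, B s & ~~ A s]} -> {in E, forall e, (e < n)%N} ->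
  (forall i, (i < n)%N -> ~~ B i -> ~~ A i \/ i \in E) ->
  load1 inp n B + load S <= load1 inp n A + load E.
Proof.
move=> uS uE hS hE hBA.
have hSn : {in S, forall s, (s < n)%N} by move=> s /hS [].
rewrite -(load_iota_mem inp uS hSn) -(load_iota_mem inp uE hE) /load1.
rewrite big_mkcond [X in _ + X]big_mkcond [X in _ <= X + _]big_mkcond.
rewrite [X in _ <= _ + X]big_mkcond -!big_split /= !big_seq.
apply: ler_sum => i; rewrite mem_iota add0n /= => hi; have p0 := p_ge0 hi.
case: (boolP (i \in S)) => [iS | _].
  by have [_ -> ->] := hS i iS; case: (i \in E) => /=; lra.
case: (boolP (B i)) => Bi /=; first by case: (~~ A i); case: (i \in E) => /=; lra.
by case: (hBA i hi Bi) => ->; case: (~~ A i); case: (i \in E) => /=; lra.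
Qed.

Lemma load1_subset (B A : nat -> bool) :
  (forall i, (i < n)%N -> ~~ B i -> ~~ A i) -> load1 inp n B <= load1 inp n A.
Proof.
move=> hBA; have := @load1_exchange B A [::] [::] isT isT.
by rewrite /load !big_nil !addr0; apply=> // i hi /(hBA i hi) ->; left.
Qed.

End Exchange.

Section Optimum.
Variable R : realFieldType.
Variable inp : seq (job R).
Local Notation p := (psz inp).
Local Notation n := (size inp).
Local Notation load := (load inp).
Hypothesis pos : positive_input inp.
Variable A : nat -> bool.
Hypothesis optA : makespan inp n A <= 1.

Lemma opt_machine_load_le1 b S : uniq S ->
  {in S, forall i, (i < n)%N /\ A i = b} -> load S <= 1.
Proof. by move=> uS hS; apply: le_trans (load_on_machine_le_makespan pos uS hS) optA. Qed.

Lemma opt_job_le1 a : (a < n)%N -> p a <= 1.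
Proof.
move=> an; rewrite -(load_seq1 inp).
by apply: (@opt_machine_load_le1 (A a)) => // i; rewrite inE => /eqP ->.
Qed.

Lemma opt_pair_le1 a b : (a < n)%N -> (b < n)%N -> a != b -> A a = A b ->
  p a + p b <= 1.
Proof.
move=> an bn ab e; rewrite -(load_seq1 inp b) -load_cons.
apply: (@opt_machine_load_le1 (A a)); first by rewrite /= inE ab.
by move=> i; rewrite !inE => /orP [] /eqP ->.
Qed.

Lemma opt_no_three_big_jobs a b c : (a < n)%N -> (b < n)%N -> (c < n)%N ->
  a != b -> a != c -> b != c -> 1/2 < p a -> 1/2 < p b -> 1/2 < p c -> False.
Proof.
move=> an bn cn ab ac bc pa pb pc.
have h1 := opt_pair_le1 an bn ab; have h2 := opt_pair_le1 an cn ac.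
have h3 := opt_pair_le1 bn cn bc.
by case Aa: (A a); case Ab: (A b); case Ac: (A c);
  first [ have := h1 (etrans Aa (esym Ab)) | have := h2 (etrans Aa (esym Ac))
        | have := h3 (etrans Ab (esym Ac)) ]; lra.
Qed.

End Optimum.

Section Makespan.
Variable R : realFieldType.
Variable inp : seq (job R).
Local Notation p := (psz inp).
Local Notation n := (size inp).
Local Notation load := (load inp).
Hypothesis pos : positive_input inp.
Variable Ys : nat -> seq nat.
Hypothesis run : B_run inp n Ys.

Lemma B_run_load_le j k : (j <= k)%N -> (k <= n)%N -> load (Ys j) <= load (Ys k).
Proof.
elim: k => [|k IH]; first by rewrite leqn0 => /eqP ->.
rewrite leq_eqVlt ltnS => /predU1P [-> // | jk] kn.
exact: le_trans (IH jk (ltnW kn)) (B_run_load_mono pos run kn).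
Qed.

Section SmallFinalLoad.
Hypothesis small : load (Ys n) < 3/4.

(* With a final load below 3/4, no step migrated, since migrations leave a
   load of at least 3/4 on [m2]. *)
Lemma B_run_small_grows j : (j < n)%N -> Ys j.+1 = Ys j \/ Ys j.+1 = j :: Ys j.
Proof.
move=> jn; have := B_run_load_le jn (leqnn n); have := small.
by case: (B_run_stepP pos run jn) => [*|*|W _ _ _ _ _ /andP [l _] *|*];
  [left | right | exfalso; lra | left].
Qed.

Lemma B_run_small_subset j k : (j <= k)%N -> (k <= n)%N -> {subset Ys j <= Ys k}.
Proof.
elim: k => [|k IH]; first by rewrite leqn0 => /eqP -> _ i.
rewrite leq_eqVlt ltnS => /predU1P [-> _ i // | jk] kn i /(IH jk (ltnW kn)) iY.
by case: (B_run_small_grows kn) => ->; rewrite ?inE iY ?orbT.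
Qed.

Lemma B_run_small_rejected r : (r < n)%N -> is_g2 inp r -> r \notin Ys n ->
  1/2 < p r /\ (reject4 inp r (Ys r) \/ reject5 inp r (Ys r)).
Proof.
move=> rn g2 rN; have yr := B_run_load_le (ltnW rn) (leqnn n); have := small.
have := B_run_load_le rn (leqnn n); have := B_run_small_subset rn (leqnn n).
case: (B_run_stepP pos run rn) => [| _ _ | W _ _ _ _ _ /andP [l _] | _ yl big rej].
- by rewrite g2 /= => c _ _ ys; lra.
- by move=> /(_ r (mem_head _ _)); rewrite (negbTE rN).
- by move=> _ h ys; lra.
- by move=> _ _ ys; split=> //; lra.
Qed.

Variable A : nat -> bool.
Hypotheses (feasA : feasible inp n A) (optA : makespan inp n A <= 1).

(* Two rejected jobs and the jobs blocking them do not fit on two machines of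
   capacity 1. *)
Lemma B_run_small_missing r i : (r < n)%N -> is_g2 inp r -> r \notin Ys n ->
  (i < n)%N -> i \notin Ys n -> ~~ A i \/ i = r.
Proof.
move=> rn g2r rN iN iY.
case g2i: (is_g2 inp i); last by left; apply/negP => /(feasA iN); rewrite g2i.
case: (eqVneq i r) => [-> | ir]; [by right | exfalso].
have [pi _] := B_run_small_rejected iN g2i iY.
have [pr rej] := B_run_small_rejected rn g2r rN.
have [_ mYn _] := B_run_inv pos run (leqnn n).
have old t : t \in Ys r -> [/\ (t < n)%N, t != r & t != i].
  move/(B_run_small_subset (ltnW rn) (leqnn n)) => tY.
  have [tn _] := andP (mYn t tY).
  by split=> //; apply/negP => /eqP e; [move: rN | move: iY]; rewrite -e tY.
case: rej => [[pr4 [p54 | [T [uT sT lT bT]]]] | [pr5 [jm /old [jn jr ji] bjm]]].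
- by have := opt_job_le1 pos optA rn; lra.
- have flip t : A t != A r -> A t = ~~ A r by case: (A t); case: (A r).
  have off t : t \in i :: T -> (t < n)%N /\ A t = ~~ A r.
    rewrite inE => /predU1P [-> | tT].
      split=> //; apply/flip/negP => /eqP e.
      by have := opt_pair_le1 pos optA iN rn ir e; lra.
    have [tn tr _] := old t (sT t tT).
    split=> //; apply/flip/negP => /eqP e.
    by have := opt_pair_le1 pos optA tn rn tr e; have := bT t tT; lra.
  have iT : i \notin T by apply/negP => /sT /old [_ _]; rewrite eqxx.
  have := opt_machine_load_le1 pos optA (_ : uniq (i :: T)) off.
  by rewrite /= iT uT load_cons => /(_ isT); lra.
- apply: (opt_no_three_big_jobs pos optA iN rn jn ir); rewrite 1?eq_sym //; lra.
Qed.

Lemma B_run_small_load1 : load1 inp n (fun i => i \in Ys n) <= 5/4.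
Proof.
have l1A : load1 inp n A <= 1 by move: optA; rewrite /makespan ge_max => /andP [].
have [_ mYn _] := B_run_inv pos run (leqnn n).
have inN t : t \in Ys n -> (t < n)%N by move/mYn/andP => [].
case: (boolP (has (fun r => is_g2 inp r && (r \notin Ys n)) (iota 0 n))); last first.
  move/hasPn => none; apply: le_trans (load1_subset pos _) _; last by lra.
  move=> i iN iY; apply/negP => /(feasA iN) g2.
  by have := none i; rewrite mem_iota iN g2 iY => /(_ isT).
case/hasP => r; rewrite mem_iota add0n /= => rn /andP [g2 rN].
have miss := B_run_small_missing rn g2 rN.
case Ar: (A r); last first.
  apply: le_trans (load1_subset pos _) _; last by lra.
  by move=> i iN iY; case: (miss i iN iY) => // ->; rewrite Ar.
(* [r] moves to [m1], but the jobs of [m2] that made [B] reject [r] are on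
   [m1] in [A]. *)
have shift S : uniq S -> {in S, forall s, s \in Ys r /\ 1 < p s + p r} ->
    load1 inp n (fun i => i \in Ys n) + load S <= 1 + p r.
  move=> uS hS; rewrite -(load_seq1 inp r).
  apply: le_trans (load1_exchange pos uS (isT : uniq [:: r]) _ _ _) _.
  - move=> s /hS [/(B_run_small_subset (ltnW rn) (leqnn n)) sY big].
    split; [exact: inN | done | apply/negP => As].
    have sr : s != r by apply: contraNneq rN => <-.
    by have := opt_pair_le1 pos optA (inN s sY) rn sr (etrans As (esym Ar)); lra.
  - by move=> e; rewrite inE => /eqP ->.
  - move=> i iN iY; rewrite inE.
    by case: (miss i iN iY) => [-> | ->]; [left | right].
  by rewrite lerD2r.
have [pr rej] := B_run_small_rejected rn g2 rN.
have := opt_job_le1 pos optA rn.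
case: rej => [[pr4 [p54 | [T [uT sT lT bT]]]] | [pr5 [jm jmY bjm]]].
- lra.
- have := shift T uT (fun t tT => conj (sT t tT) (bT t tT)); lra.
- have : {in [:: jm], forall s, s \in Ys r /\ 1 < p s + p r}.
    by move=> s; rewrite inE => /eqP ->; split=> //; lra.
  by move/(shift [:: jm] isT); rewrite load_seq1; lra.
Qed.

End SmallFinalLoad.

Lemma B_run_makespan A : feasible inp n A -> makespan inp n A <= 1 ->
  makespan inp n (fun i => i \in Ys n) <= 5/4.
Proof.
move=> feasA optA; have [uN mN lN] := B_run_inv pos run (leqnn n).
have l2B : load2 inp n (fun i => i \in Ys n) = load (Ys n).
  by rewrite /load2 load_iota_mem // => i /mN /andP [].
rewrite /makespan ge_max l2B lN andbT.
case: (ltP (load (Ys n)) (3/4)) => [small | big].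
  by apply: (B_run_small_load1 _ feasA optA); lra.
have tB := load1D2 inp n (fun i => i \in Ys n); have tA := load1D2 inp n A.
move: optA; rewrite /makespan ge_max l2B in tB * => /andP [l1A l2A].
lra.
Qed.

End Makespan.

(* A deterministic instance of Algorithm B.  It is parametrised by the size
   and grade functions rather than by the input, so that running it on a
   prefix of the input can be compared with running it on the whole input. *)
Section Deterministic.
Variable R : realFieldType.

Definition loadf (f : nat -> R) (Y : seq nat) : R := \sum_(i <- Y) f i.
Definition pmaxf (f : nat -> R) (Y : seq nat) : R := \big[Num.max/0]_(i <- Y) f i.
Definition sort_desc (f : nat -> R) (Y : seq nat) := sort (fun a b => f b <= f a) Y.
Definition longest_prefix_len (f : nat -> R) (s : seq nat) (b : R) : nat :=
  find (fun k => b < loadf f (take k.+1 s)) (iota 0 (size s)).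
Definition shortest_prefix_len (f : nat -> R) (s : seq nat) (b : R) : nat :=
  find (fun k => b <= loadf f (take k s)) (iota 0 (size s).+1).

Definition stepB (f : nat -> R) (g : nat -> bool) (j : nat) (Y : seq nat) : seq nat :=
  let p := f j in let y := loadf f Y in let pm := pmaxf f Y in
  let s := sort_desc f Y in
  if ~~ g j || (3/4 <= y) then Y
  else if y + p <= 5/4 then j :: Y
  else if 3/4 <= p then
    let W := take (longest_prefix_len f s (3/4 * p)) s in
    if 5/4 < y - loadf f W + p then Y else j :: [seq i <- Y | i \notin W]
  else if 5/4 < p + pm then Y
  else
    let jm := head 0%N s in
    let W := if y / 2 <= pm then [seq i <- Y | i != jm]
             else if 1/4 <= pm then [:: jm]
             else let W0 := take (shortest_prefix_len f s (1/4)) s in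
                  if 3/4 * p < loadf f W0 then [seq i <- Y | i \notin W0] else W0 in
    j :: [seq i <- Y | i \notin W].

Fixpoint runB (f : nat -> R) (g : nat -> bool) (k : nat) : seq nat :=
  if k is k'.+1 then stepB f g k' (runB f g k') else [::].

Lemma sort_desc_eq_in f f' Y : {in Y, f =1 f'} -> sort_desc f Y = sort_desc f' Y.
Proof.
move=> h.
have E h' : sort_desc h' Y =
    map fst (sort (fun a b : nat * R => b.2 <= a.2) (map (fun i => (i, h' i)) Y)).
  by rewrite sort_map -map_comp map_id.
by rewrite !E; congr (map _ (sort _ _)); apply/eq_in_map => i iY /=; rewrite h.
Qed.

Lemma stepB_eq_in f f' g g' j Y : {in j :: Y, f =1 f'} -> g j = g' j ->
  stepB f g j Y = stepB f' g' j Y.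
Proof.
move=> hf hg.
have hY : {in Y, f =1 f'} by move=> i iY; apply: hf; rewrite inE iY orbT.
have hj : f j = f' j by apply/hf/mem_head.
have eL Z : {subset Z <= Y} -> loadf f Z = loadf f' Z.
  by move=> sZ; apply: eq_big_seq => i /sZ /hY.
have eT k : loadf f (take k (sort_desc f' Y)) = loadf f' (take k (sort_desc f' Y)).
  by apply: eL => i /mem_take; rewrite mem_sort.
have eM : pmaxf f Y = pmaxf f' Y by apply: eq_big_seq.
have eLp b : longest_prefix_len f (sort_desc f' Y) b =
             longest_prefix_len f' (sort_desc f' Y) b.
  by apply: eq_find => k; rewrite eT.
have eSp b : shortest_prefix_len f (sort_desc f' Y) b =
             shortest_prefix_len f' (sort_desc f' Y) b.
  by apply: eq_find => k; rewrite eT.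
by rewrite /stepB /= hg hj (eL Y) // eM (sort_desc_eq_in hY) !eLp !eSp !eT.
Qed.

Lemma stepB_sub f g j Y : {subset stepB f g j Y <= j :: Y}.
Proof.
have s1 : {subset Y <= j :: Y} by move=> i iY; rewrite inE iY orbT.
have s2 (P : pred nat) : {subset j :: [seq i <- Y | P i] <= j :: Y}.
  by move=> i; rewrite !inE mem_filter => /orP [-> | /andP [_ ->]]; rewrite ?orbT.
by rewrite /stepB /=; do ! case: ifP => _; first [exact: s1 | exact: s2 | done].
Qed.

Lemma runB_lt f g j i : i \in runB f g j -> (i < j)%N.
Proof.
elim: j i => [|j IH] i //= /stepB_sub; rewrite inE => /predU1P [-> // | /IH].
exact: ltnW.
Qed.

End Deterministic.

Section DeterministicSpec.
Variable R : realFieldType.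
Variable inp : seq (job R).
Local Notation p := (psz inp).
Local Notation n := (size inp).

Lemma sorted_of_sort_desc Y : sorted_of inp (sort_desc p Y) Y.
Proof.
apply/andP; split; first by rewrite perm_sort perm_refl.
by apply: sort_sorted => a b; rewrite le_total.
Qed.

Lemma longest_prefix_len_spec s b : 0 <= b -> {in s, forall i, 0 <= p i} ->
  longest_prefix_le inp s b (take (longest_prefix_len p s b) s).
Proof.
move=> b0 hs; set k := longest_prefix_len p s b.
have ks : (k <= size s)%N.
  by rewrite /k /longest_prefix_len -{2}(size_iota 0 (size s)) find_size.
exists k; split => //.
- case kE: k => [|k0]; first by rewrite take0 /load big_nil.
  have /(before_find 0%N) : (k0 < k)%N by rewrite kE.
  rewrite nth_iota ?add0n -?kE // => /negbT; by rewrite -leNgt.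
- move=> k' kk' k's; have kl : (k < size s)%N by apply: leq_trans kk' k's.
  have /(nth_find 0%N) : has (fun k => b < loadf p (take k.+1 s)) (iota 0 (size s)).
    by rewrite has_find size_iota.
  rewrite -/(longest_prefix_len p s b) -/k nth_iota // add0n => h.
  by apply: lt_le_trans h _; apply: load_take_mono.
Qed.

Lemma shortest_prefix_len_spec s b :
  shortest_prefix_ge inp s b (take (shortest_prefix_len p s b) s).
Proof.
set k := shortest_prefix_len p s b.
case hk: (has (fun k => b <= loadf p (take k s)) (iota 0 (size s).+1)).
- left; exists k.
  have kl : (k < (size s).+1)%N.
    by rewrite /k /shortest_prefix_len -{2}(size_iota 0 (size s).+1) -has_find.
  split => //.
    by move: hk => /(nth_find 0%N); rewrite -/k nth_iota // add0n.
  move=> k' kk'; move: (before_find 0%N kk').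
  by rewrite nth_iota ?add0n ?(ltn_trans kk') // => /negbT; rewrite -ltNge.
- right; split.
  + move=> k' k's; move/hasPn: (negbT hk) => /(_ k').
    by rewrite mem_iota add0n ltnS k's -ltNge => /(_ isT).
  + rewrite take_oversize // /k /shortest_prefix_len.
    by move: hk; rewrite has_find size_iota => /negbT; rewrite -leqNgt => /ltnW.
Qed.

Lemma head_sort_desc Y : Y != [::] -> {in Y, forall i, 0 <= p i} ->
  head 0%N (sort_desc p Y) \in Y /\ p (head 0%N (sort_desc p Y)) = pmaxY inp Y.
Proof.
move=> Yn hY; have /andP [_ so] := sorted_of_sort_desc Y.
have mS i : (i \in sort_desc p Y) = (i \in Y) by rewrite mem_sort.
have : sort_desc p Y != [::] by rewrite -size_eq0 size_sort size_eq0.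
case E: (sort_desc p Y) so mS => [|h t] // so mS _ /=.
have hY' : h \in Y by rewrite -mS mem_head.
split=> //; apply/eqP; rewrite eq_le pmaxY_ge //=.
apply: pmaxY_le; first exact: hY.
move=> i; rewrite -mS inE => /predU1P [-> // | it].
by move: (order_path_min (@sorted_desc_trans _ inp) so) => /allP /(_ i it).
Qed.

Lemma stepB_spec j Y : {in Y, forall i, 0 < p i} ->
  B_step inp j Y (stepB p (is_g2 inp) j Y).
Proof.
move=> hY; have hY0 : {in Y, forall i, 0 <= p i} by move=> i /hY /ltW.
rewrite /B_step /stepB /= (_ : loadf p = load inp) // (_ : pmaxf p = pmaxY inp) //.
case: ifP => c2; rewrite c2 //; case: ifP => c3; rewrite c3 //.
case: ifP => c4; rewrite c4.
  exists (sort_desc p Y), (take (longest_prefix_len p (sort_desc p Y) (3/4 * p j))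
    (sort_desc p Y)); split.
  - exact: sorted_of_sort_desc.
  - by apply: longest_prefix_len_spec => [|i]; [lra | rewrite mem_sort; apply: hY0].
  - by case: ifP => c; rewrite c.
case: ifP => c5; rewrite c5 //.
eexists; split; last reflexivity.
have Yn : Y != [::].
  apply/eqP => Y0; move: c3 c5; rewrite Y0 /pmaxY /load !big_nil.
  by move/negbT; rewrite -ltNge => h1; move/negbT; rewrite -leNgt => h2; lra.
have [hm1 hm2] := head_sort_desc Yn hY0.
rewrite /step5_W /=; case: ifP => c6; rewrite ?c6.
  by exists (head 0%N (sort_desc p Y)).
case: ifP => c7; rewrite ?c7; first by exists (head 0%N (sort_desc p Y)).
exists (sort_desc p Y), (take (shortest_prefix_len p (sort_desc p Y) (1/4))
  (sort_desc p Y)); split=> //.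
- exact: sorted_of_sort_desc.
- exact: shortest_prefix_len_spec.
Qed.

Lemma runB_run : positive_input inp -> B_run inp n (runB p (is_g2 inp)).
Proof.
move=> pos; split => // j jn /=; apply: stepB_spec => i /runB_lt ij.
by apply: pos; apply: ltn_trans ij jn.
Qed.

Lemma runB_take m k : (k <= m)%N ->
  runB (psz (take m inp)) (is_g2 (take m inp)) k = runB p (is_g2 inp) k.
Proof.
elim: k => [|k IH] // km /=; rewrite IH ?(ltnW km) //.
apply: stepB_eq_in; last by rewrite /is_g2 /pg nth_take.
move=> i; rewrite inE => /predU1P [-> | /runB_lt ik]; rewrite /psz nth_take //.
exact: ltn_trans ik km.
Qed.

End DeterministicSpec.

Theorem mainTheorem5 (R : realFieldType) :
  (forall inp : seq (job R), positive_input inp ->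
     (exists Ys, B_run inp (size inp) Ys) /\
     (forall Ys, B_run inp (size inp) Ys ->
        [/\ (forall j, (j < size inp)%N ->
               migration inp j (fun i => i \in Ys j) (fun i => i \in Ys j.+1)
                 <= 3/4 * psz inp j),
            (forall j, (j <= size inp)%N ->
               feasible inp j (fun i => i \in Ys j)) &
            (opt_is inp (size inp) 1 ->
               makespan inp (size inp) (fun i => i \in Ys (size inp)) <= 5/4)]))
  /\
  (forall M : R, 3/4 <= M ->
     exists alg : online_alg R, semi_online_ok M (5/4) alg).
Proof.
have feasible_run inp Ys : positive_input inp -> B_run inp (size inp) Ys ->
    forall j, (j <= size inp)%N -> feasible inp j (fun i => i \in Ys j).
  move=> pos run j jn i _ iY; have [_ mY _] := B_run_inv pos run jn.
  by case/andP: (mY i iY).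
have makespan_run inp Ys : positive_input inp -> B_run inp (size inp) Ys ->
    opt_is inp (size inp) 1 ->
    makespan inp (size inp) (fun i => i \in Ys (size inp)) <= 5/4.
  by move=> pos run [[A [fA mA]] _]; apply: (B_run_makespan pos run fA); rewrite mA.
split=> [inp pos | M hM].
  split=> [|Ys run]; first by exists (runB (psz inp) (is_g2 inp)); apply: runB_run.
  split; [exact: B_run_migration | exact: feasible_run | exact: makespan_run].
exists (fun s i => i \in runB (psz s) (is_g2 s) (size s)) => inp pos opt.
have run := runB_run pos; split; last exact: makespan_run.
move=> j jn; rewrite !size_takel ?(ltnW jn) // !runB_take ?leqnn //.
split; first exact: feasible_run.
apply: le_trans (B_run_migration pos run jn) _.
by rewrite ler_wpM2r // ltW // pos.
Qed.
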